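(* Let $(x^J_{i,k})$ be generated by the interleaved consensus and projected gradient descent iteration described in the context, under the standing assumptions, with SLC constant $M>0$ and BUC constant $\bar M>0$, and with each $B_k$ a nonnegative doubly stochastic matrix. Then for every $y\in\mathcal{X}$ and every $k\ge 0$, $$\eta_{k+1}^2 \le (1+\gamma_k)\,\eta_k^2 - 2\alpha_k M\big(f(\bar{x}_{0,k})-f(y)\big) + \alpha_k^2\,(C_1^2+C_2^2+C_3^2) + \alpha_k C_4 \max_{J}\|\delta^J_k\|,$$ where $\eta_k^2=\sum_{J=1}^S\|x^J_{0,k}-y\|^2$, $\gamma_k=\frac{1}{S}\big(2\alpha_k^2\bar M^2\,\mathbf{N}\,\mathbf{L}+\alpha_k\bar M\,\mathbf{N}\max_J\|\delta^J_k\|\big)$, $C_1^2=\sum_{i=1}^{\Delta}\sum_{J=1}^S\big(\sum_{h=1}^C|W_{i-1,k}[J,h]|\,L_h\big)^2$, $C_2^2=4(\bar M\mathbf{L})^2$, $C_3^2=2\bar M^2\mathbf{N}\mathbf{L}$, and $C_4=\bar M(2\mathbf{L}+\mathbf{N})$.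
   Context: Standing setup. Integers $S\ge1$ (servers), $C\ge1$ (clients), $D\ge1$, $\Delta\ge1$. $\mathcal{X}\subseteq\mathbb{R}^D$ is a nonempty convex compact set and $\mathcal{P}_{\mathcal{X}}$ is Euclidean projection onto $\mathcal{X}$. For $h=1,\dots,C$, $f_h:\mathbb{R}^D\to\mathbb{R}$ is continuously differentiable and convex with gradient $g_h$; there are constants $L_h$ with $\|g_h(x)\|\le L_h$ for all $x\in\mathcal{X}$ and constants $N_h>0$ with $\|g_h(x)-g_h(y)\|\le N_h\|x-y\|$ for all $x,y\in\mathcal{X}$. Set $\mathbf{L}=\sum_h L_h$, $\mathbf{N}=\sum_h N_h$, $f=\sum_{h=1}^C f_h$, $f^*=\min_{x\in\mathcal{X}}f(x)$, $\mathcal{X}^*=\{x\in\mathcal{X}: f(x)=f^*\}$, $\mathrm{dist}(x,\mathcal{X}^* )=\inf_{x^*\in\mathcal{X}^*}\|x-x^*\|$. Norms are Euclidean. Step sizes $\alpha_k>0$. Weight matrices $W_{i,k}\in\mathbb{R}^{S\times C}$ ($0\le i\le\Delta-1$, $k\ge0$), entries possibly negative. Symmetric Learning Condition (SLC): there is $M>0$ with $\sum_{i=1}^{\Delta}\sum_{J=1}^S W_{i-1,k}[J,h]=M$ for all $k\ge0$ and all $h$. Bounded Update Condition (BUC): there is $\bar M>0$ with $\sum_{i=1}^{\Delta}\sum_{J=1}^S |W_{i-1,k}[J,h]|\le\bar M$ for all $k,h$. Consensus matrices $B_k\in\mathbb{R}^{S\times S}$ have nonnegative entries. Iteration: given $x^J_{0,0}\in\mathcal{X}$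 ($J=1,\dots,S$), for each $k\ge0$ and $i=1,\dots,\Delta$, $x^J_{i,k}=\mathcal{P}_{\mathcal{X}}\big[x^J_{i-1,k}-\alpha_k\sum_{h=1}^C W_{i-1,k}[J,h]\,g_h(x^J_{i-1,k})\big]$, and then $x^I_{0,k+1}=\sum_{J=1}^S B_k[I,J]\,x^J_{\Delta,k}$. Averages: $\bar x_{i,k}=\frac1S\sum_{J=1}^S x^J_{i,k}$; disagreements: $\delta^J_k=x^J_{0,k}-\bar x_{0,k}$. *)

From Stdlib Require Import Reals Lra.
From HB Require Import structures.
From mathcomp Require Import all_boot.
Set Implicit Arguments. Unset Strict Implicit. Unset Printing Implicit Defensive.

Local Open Scope R_scope.

Lemma Rplus_assoc' : associative Rplus.
Proof. intros a b c; symmetry; apply Rplus_assoc. Qed.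
HB.instance Definition _ := Monoid.isComLaw.Build R R0 Rplus
  Rplus_assoc' Rplus_comm Rplus_0_l.

Definition sumR (n : nat) (F : 'I_n -> R) : R := \big[Rplus/0]_(i < n) F i.
(* finite max over 'I_n of nonnegative quantities (0 for n = 0) *)
Definition maxR (n : nat) (F : 'I_n -> R) : R := \big[Rmax/0]_(i < n) F i.

Definition vec (D : nat) := 'I_D -> R.
Definition vadd D (u v : vec D) : vec D := fun d => u d + v d.
Definition vsub D (u v : vec D) : vec D := fun d => u d - v d.
Definition vscale D (a : R) (u : vec D) : vec D := fun d => a * u d.
Definition vsum D (n : nat) (F : 'I_n -> vec D) : vec D := fun d => sumR (fun i => F i d).
Definition dot D (u v : vec D) : R := sumR (fun d => u d * v d).
Definition vnorm D (u : vec D) : R := sqrt (dot u u).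

Definition convex_set D (X : vec D -> Prop) : Prop :=
  forall x y t, X x -> X y -> 0 <= t <= 1 ->
    X (vadd (vscale t x) (vscale (1 - t) y)).
Definition closed_set D (X : vec D -> Prop) : Prop :=
  forall z, (forall eps, 0 < eps -> exists x, X x /\ vnorm (vsub x z) < eps) -> X z.
Definition bounded_set D (X : vec D -> Prop) : Prop :=
  exists r, forall x, X x -> vnorm x <= r.
(* compact subset of R^D = closed and bounded (Heine-Borel) *)
Definition compact_set D (X : vec D -> Prop) : Prop := closed_set X /\ bounded_set X.

Definition is_projection D (X : vec D -> Prop) (P : vec D -> vec D) : Prop :=
  forall z, X (P z) /\ forall y, X y -> vnorm (vsub z (P z)) <= vnorm (vsub z y).

Definition convex_fun D (f : vec D -> R) : Prop :=
  forall x y t, 0 <= t <= 1 ->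
    f (vadd (vscale t x) (vscale (1 - t) y)) <= t * f x + (1 - t) * f y.

Definition has_gradient D (f : vec D -> R) (g : vec D -> vec D) : Prop :=
  forall x eps, 0 < eps -> exists delta, 0 < delta /\
    forall y, vnorm (vsub y x) < delta ->
      Rabs (f y - f x - dot (g x) (vsub y x)) <= eps * vnorm (vsub y x).

Definition continuous_vec D (g : vec D -> vec D) : Prop :=
  forall x eps, 0 < eps -> exists delta, 0 < delta /\
    forall y, vnorm (vsub y x) < delta -> vnorm (vsub (g y) (g x)) < eps.

Definition doubly_stochastic (S : nat) (B : 'I_S -> 'I_S -> R) : Prop :=
  (forall I J, 0 <= B I J) /\
  (forall I, sumR (fun J => B I J) = 1) /\
  (forall J, sumR (fun I => B I J) = 1).

From Stdlib Require Import Reals Lra FunctionalExtensionality.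
From HB Require Import structures.
From mathcomp Require Import all_boot.
Set Implicit Arguments. Unset Strict Implicit.
Local Open Scope R_scope.

(* Each local step is a projection, which is non-expansive towards [y] in [X], so
   |x_{i+1} - y|^2 <= |x_i - y|^2 - 2 alpha <d_i, x_i - y> + alpha^2 |d_i|^2 with d_i the
   weighted gradient; mixing with a doubly stochastic B_k can only decrease
   sum_J |x^J - y|^2 (Jensen). Every local iterate of the round stays within
   e = alpha Mbar L + max_J |delta^J| of the average xbar, so <g_h(x_i), x_i - y> differs from
   <g_h(xbar), xbar - y> by at most L_h e + N_h e |xbar - y|. Summing with the weights, SLC
   turns the main part into M sum_h <g_h(xbar), xbar - y> >= M (f(xbar) - f(y)) (convexity)
   and BUC bounds the error by Mbar times the sum of the deviations. Finally
   |xbar - y|^2 <= eta_k^2 / S, and 2 |xbar - y| <= eta_k^2 / S + 1 produces gamma_k. *)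

(** * Finite sums *)

Lemma sumR_ext n (F G : 'I_n -> R) : (forall i, F i = G i) -> sumR F = sumR G.
Proof. by move=> FG; apply: eq_bigr => i _. Qed.

Lemma sumRD n (F G : 'I_n -> R) : sumR (fun i => F i + G i) = sumR F + sumR G.
Proof. exact: big_split. Qed.

Lemma sumRZ n c (F : 'I_n -> R) : sumR (fun i => c * F i) = c * sumR F.
Proof. rewrite /sumR; elim/big_rec2: _ => [|i a b _ ->]; ring. Qed.

Lemma sumRZr n c (F : 'I_n -> R) : sumR (fun i => F i * c) = sumR F * c.
Proof. rewrite /sumR; elim/big_rec2: _ => [|i a b _ ->]; ring. Qed.

Lemma sumRB n (F G : 'I_n -> R) : sumR (fun i => F i - G i) = sumR F - sumR G.
Proof. rewrite /sumR; elim/big_rec3: _ => [|i a b c _ ->]; ring. Qed.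

Lemma sumR_const n c : sumR (fun _ : 'I_n => c) = INR n * c.
Proof.
rewrite /sumR big_const_ord; elim: n => [|n IH]; first by rewrite /=; ring.
by rewrite S_INR /= IH; ring.
Qed.

Lemma sumR_le n (F G : 'I_n -> R) : (forall i, F i <= G i) -> sumR F <= sumR G.
Proof. move=> FG; rewrite /sumR; elim/big_rec2: _ => [|i a b _]; [lra | have := FG i; lra]. Qed.

Lemma sumR_ge0 n (F : 'I_n -> R) : (forall i, 0 <= F i) -> 0 <= sumR F.
Proof. move=> F0; rewrite /sumR; elim/big_rec: _ => [|i a _]; [lra | have := F0 i; lra]. Qed.

Lemma sumR_swap m n (F : 'I_m -> 'I_n -> R) :
  sumR (fun i => sumR (fun j => F i j)) = sumR (fun j => sumR (fun i => F i j)).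
Proof. exact: exchange_big. Qed.

Lemma sumR_ge_term n (F : 'I_n -> R) j : (forall i, 0 <= F i) -> F j <= sumR F.
Proof.
move=> F0; rewrite /sumR (bigD1 j) //= -{1}(Rplus_0_r (F j)); apply: Rplus_le_compat_l.
by elim/big_rec: _ => [|i a _]; [lra | have := F0 i; lra].
Qed.

Lemma sumR_prefix_le (F : nat -> R) m n : (forall i, 0 <= F i) -> (m <= n)%N ->
  sumR (fun i : 'I_m => F i) <= sumR (fun i : 'I_n => F i).
Proof.
move=> F0 mn; rewrite /sumR -!(big_mkord xpredT F) (big_cat_nat (leq0n m) mn) /=.
rewrite -{1}(Rplus_0_r (\big[_/_]_(0 <= i < m) F i)); apply: Rplus_le_compat_l.
by elim/big_rec: _ => [|i a _]; [lra | have := F0 i; lra].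
Qed.

Lemma maxR_ge n (F : 'I_n -> R) j : F j <= maxR F.
Proof.
elim: n F j => [|n IH] F j; first by case: j.
rewrite /maxR big_ord_recl; case: (unliftP ord0 j) => [j'|] ->; last exact: Rmax_l.
exact: Rle_trans (IH _ j') (Rmax_r _ _).
Qed.

Lemma maxR_ge0 n (F : 'I_n -> R) : 0 <= maxR F.
Proof. rewrite /maxR; elim/big_rec: _ => [|i a _ Ha]; [lra | exact: Rle_trans Ha (Rmax_r _ _)]. Qed.

(** * Euclidean geometry *)

Lemma le_of_pow2_le a b : 0 <= b -> a ^ 2 <= b ^ 2 -> a <= b.
Proof. nra. Qed.

Section Euclidean.
Variable D : nat.
Implicit Types u v w : vec D.

Lemma vec_ext u v : (forall d, u d = v d) -> u = v.
Proof. exact: functional_extensionality. Qed.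

Lemma dotC u v : dot u v = dot v u.
Proof. by apply: sumR_ext => d; rewrite Rmult_comm. Qed.

Lemma dot_scalel c u v : dot (vscale c u) v = c * dot u v.
Proof. by rewrite /dot -sumRZ; apply: sumR_ext => d; rewrite /vscale Rmult_assoc. Qed.

Lemma dot_scaler c u v : dot u (vscale c v) = c * dot u v.
Proof. by rewrite dotC dot_scalel dotC. Qed.

Lemma dot_subl u v w : dot (vsub u v) w = dot u w - dot v w.
Proof. by rewrite /dot -sumRB; apply: sumR_ext => d; rewrite /vsub Rmult_minus_distr_r. Qed.

Lemma dot_subr u v w : dot u (vsub v w) = dot u v - dot u w.
Proof. by rewrite dotC dot_subl !(dotC u). Qed.

Lemma dot_vsuml n (F : 'I_n -> vec D) w : dot (vsum F) w = sumR (fun h => dot (F h) w).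
Proof.
rewrite /dot /vsum (sumR_ext (G := fun d => sumR (fun h => F h d * w d))).
  exact: sumR_swap.
by move=> d; rewrite Rmult_comm -sumRZ; apply: sumR_ext => h; rewrite Rmult_comm.
Qed.

Lemma dot_self_ge0 u : 0 <= dot u u.
Proof. by apply: sumR_ge0 => d; apply: Rle_0_sqr. Qed.

Lemma vnorm_ge0 u : 0 <= vnorm u.
Proof. exact: sqrt_pos. Qed.

Lemma vnorm_sq u : vnorm u ^ 2 = dot u u.
Proof. exact: pow2_sqrt (dot_self_ge0 u). Qed.

Lemma vnorm_sub_sq u v : vnorm (vsub u v) ^ 2 = vnorm u ^ 2 - 2 * dot u v + vnorm v ^ 2.
Proof. rewrite !vnorm_sq dot_subl !dot_subr (dotC v u); ring. Qed.

Lemma vnorm_scale c u : vnorm (vscale c u) = Rabs c * vnorm u.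
Proof.
rewrite /vnorm dot_scalel dot_scaler -Rmult_assoc sqrt_mult_alt; last exact: Rle_0_sqr.
by rewrite -/(Rsqr c) sqrt_Rsqr_abs.
Qed.

Lemma vnormB_sym u v : vnorm (vsub u v) = vnorm (vsub v u).
Proof.
have -> : vsub u v = vscale (-1) (vsub v u) by apply: vec_ext => d; rewrite /vsub /vscale; ring.
by rewrite vnorm_scale Rabs_Ropp Rabs_R1 Rmult_1_l.
Qed.

Lemma dot_sq_le u v : dot u v ^ 2 <= dot u u * dot v v.
Proof.
have gram s t : 0 <= s ^ 2 * dot u u - 2 * s * t * dot u v + t ^ 2 * dot v v.
  have := pow2_ge_0 (vnorm (vsub (vscale s u) (vscale t v))).
  rewrite vnorm_sub_sq !vnorm_sq !dot_scalel !dot_scaler; nra.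
have uu0 := dot_self_ge0 u.
case: (Rle_lt_or_eq_dec 0 (dot v v) (dot_self_ge0 v)) => [vv_pos | vv0].
  have := gram (dot v v) (dot u v); nra.
have := gram (dot u v) (dot u u + 1); rewrite -vv0; nra.
Qed.

Lemma dot_le_vnorm u v : Rabs (dot u v) <= vnorm u * vnorm v.
Proof.
apply: le_of_pow2_le; first by apply: Rmult_le_pos; apply: vnorm_ge0.
rewrite pow2_abs Rpow_mult_distr !vnorm_sq; exact: dot_sq_le.
Qed.

Lemma vnorm_add_le u v : vnorm (vadd u v) <= vnorm u + vnorm v.
Proof.
have -> : vadd u v = vsub u (vscale (-1) v) by apply: vec_ext => d; rewrite /vadd /vsub /vscale; ring.
have nu := vnorm_ge0 u; have nv := vnorm_ge0 v.
have uv := Rle_abs (dot u v); have cs := dot_le_vnorm u v.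
apply: le_of_pow2_le; first lra.
rewrite vnorm_sub_sq vnorm_scale dot_scaler Rabs_Ropp Rabs_R1; nra.
Qed.

Lemma vnorm_sub_le u v w : vnorm (vsub u w) <= vnorm (vsub u v) + vnorm (vsub v w).
Proof.
have -> : vsub u w = vadd (vsub u v) (vsub v w) by apply: vec_ext => d; rewrite /vadd /vsub; ring.
exact: vnorm_add_le.
Qed.

Lemma vnorm_vsum_le n (F : 'I_n -> vec D) : vnorm (vsum F) <= sumR (fun i => vnorm (F i)).
Proof.
elim: n F => [|n IH] F.
  have -> : vsum F = vscale 0 (vsum F) by apply: vec_ext => d; rewrite /vsum /vscale /sumR !big_ord0; ring.
  by rewrite vnorm_scale Rabs_R0 Rmult_0_l /sumR big_ord0; lra.
have -> : vsum F = vadd (vsum (fun i => F (widen_ord (leqnSn n) i))) (F ord_max).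
  by apply: vec_ext => d; rewrite /vsum /vadd /sumR big_ord_recr.
rewrite /sumR big_ord_recr /=; apply: Rle_trans (vnorm_add_le _ _) _.
by apply: Rplus_le_compat_r; apply: IH.
Qed.
End Euclidean.

(** * Projections, convexity and Jensen's inequality *)

Lemma nonpos_of_forall_eps_le a Q : 0 <= Q -> (forall eps, 0 < eps -> a <= eps * Q) -> a <= 0.
Proof.
move=> Q0 aQ; apply: Rnot_lt_le => a_pos.
have eps_pos : 0 < a / (2 * (Q + 1)) by apply: Rdiv_lt_0_compat; lra.
have eps_mul : a / (2 * (Q + 1)) * (2 * (Q + 1)) = a by field; lra.
have := aQ _ eps_pos; nra.
Qed.

Section ConvexAnalysis.
Variable D : nat.
Implicit Types (u v w y : vec D) (X : vec D -> Prop).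

Lemma proj_obtuse X P : convex_set X -> is_projection X P ->
  forall w y, X y -> dot (vsub w (P w)) (vsub y (P w)) <= 0.
Proof.
move=> convX projP w y Xy; have [XPw Pw_min] := projP w.
set p := P w in XPw Pw_min *; set A := dot _ _.
apply: (nonpos_of_forall_eps_le (dot_self_ge0 (vsub y p))) => eps eps_pos.
set t := Rmin 1 (2 * eps).
have t_pos : 0 < t by apply: Rmin_pos; lra.
have t_le1 : t <= 1 := Rmin_l _ _.
have t_le : t <= 2 * eps := Rmin_r _ _.
have := Pw_min _ (convX y p t Xy XPw (conj (Rlt_le _ _ t_pos) t_le1)).
have -> : vsub w (vadd (vscale t y) (vscale (1 - t) p)) = vsub (vsub w p) (vscale t (vsub y p)).
  by apply: vec_ext => d; rewrite /vsub /vadd /vscale; ring.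
move=> min_le; have := pow_incr _ _ 2 (conj (vnorm_ge0 _) min_le).
rewrite [X in _ <= X]vnorm_sub_sq vnorm_scale dot_scaler Rabs_pos_eq; last lra.
rewrite Rpow_mult_distr !vnorm_sq -/A => le_sq.
have Q0 := dot_self_ge0 (vsub y p).
have : 2 * A <= t * dot (vsub y p) (vsub y p).
  apply: (Rmult_le_reg_l t) => //; nra.
nra.
Qed.

Lemma proj_nonexpansive X P : convex_set X -> is_projection X P ->
  forall w y, X y -> vnorm (vsub (P w) y) <= vnorm (vsub w y).
Proof.
move=> convX projP w y Xy; have obtuse := proj_obtuse convX projP w Xy.
have -> : vsub w y = vsub (vsub w (P w)) (vsub y (P w)).
  by apply: vec_ext => d; rewrite /vsub; ring.
apply: le_of_pow2_le; first exact: vnorm_ge0.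
rewrite [X in _ <= X]vnorm_sub_sq (vnormB_sym y); have := pow2_ge_0 (vnorm (vsub w (P w))); lra.
Qed.

Lemma convex_gradient_ineq f g : has_gradient f g -> convex_fun f ->
  forall x y, f x + dot (g x) (vsub y x) <= f y.
Proof.
move=> grad_f conv_f x y; set A := dot _ _; set Q := vnorm (vsub y x).
have Q0 : 0 <= Q := vnorm_ge0 _.
suff : f x + A - f y <= 0 by lra.
apply: (nonpos_of_forall_eps_le Q0) => eps eps_pos.
have [delta [delta_pos near_x]] := grad_f x eps eps_pos.
set t := Rmin 1 (delta / (2 * (Q + 1))).
have t_pos : 0 < t by apply: Rmin_pos; [lra | apply: Rdiv_lt_0_compat; lra].
have t_le1 : t <= 1 := Rmin_l _ _.
have t_small : t * (2 * (Q + 1)) <= delta.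
  have -> : delta = delta / (2 * (Q + 1)) * (2 * (Q + 1)) by field; lra.
  by apply: Rmult_le_compat_r; [lra | exact: Rmin_r].
set z := vadd (vscale t y) (vscale (1 - t) x).
have zx : vsub z x = vscale t (vsub y x) by apply: vec_ext => d; rewrite /z /vsub /vadd /vscale; ring.
have norm_zx : vnorm (vsub z x) = t * Q by rewrite zx vnorm_scale Rabs_pos_eq //; lra.
have := near_x z ltac:(rewrite norm_zx; nra).
rewrite norm_zx zx dot_scaler -/A => taylor.
have := Rle_abs (- (f z - f x - t * A)); rewrite Rabs_Ropp => lin_lower.
have := conv_f y x t (conj (Rlt_le _ _ t_pos) t_le1); rewrite -/z => conv_upper.
apply: (Rmult_le_reg_l t) => //; nra.
Qed.

Lemma convex_comb_mem X n (b : 'I_n -> R) (p : 'I_n -> vec D) : convex_set X ->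
  (forall J, 0 <= b J) -> sumR b = 1 -> (forall J, X (p J)) ->
  X (vsum (fun J => vscale (b J) (p J))).
Proof.
move=> convX; elim: n b p => [|n IH] b p b0 b1 Xp; first by rewrite /sumR big_ord0 in b1; lra.
set b' := fun i : 'I_n => b (widen_ord (leqnSn n) i).
set p' := fun i : 'I_n => p (widen_ord (leqnSn n) i).
set s := sumR b'.
have b'0 i : 0 <= b' i := b0 _.
have last_b : b ord_max = 1 - s by rewrite /s /b' -b1 /sumR big_ord_recr /=; ring.
have split_sum : vsum (fun J => vscale (b J) (p J))
    = vadd (vsum (fun i => vscale (b' i) (p' i))) (vscale (1 - s) (p ord_max)).
  by apply: vec_ext => d; rewrite /vsum /vadd /vscale /sumR big_ord_recr /= -last_b.
have s0 : 0 <= s := sumR_ge0 b'0.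
have s1 : s <= 1 by have := b0 ord_max; lra.
case: (Rle_lt_or_eq_dec 0 s s0) => [s_pos | s_eq0].
  have w0 i : 0 <= b' i / s by apply: Rmult_le_pos => //; apply: Rlt_le; exact: Rinv_0_lt_compat.
  have w1 : sumR (fun i => b' i / s) = 1 by rewrite /Rdiv sumRZr -/s; field; lra.
  have := convX _ _ s (IH _ p' w0 w1 (fun i => Xp _)) (Xp ord_max) (conj s0 s1).
  rewrite split_sum; congr X; apply: vec_ext => d; rewrite /vadd /vscale /vsum -sumRZ.
  by congr (_ + _); apply: sumR_ext => i; field; lra.
have b'_eq0 i : b' i = 0 by have := sumR_ge_term i b'0; have := b'0 i; rewrite -/s; lra.
have -> : vsum (fun J => vscale (b J) (p J)) = p ord_max.
  apply: vec_ext => d; rewrite split_sum /vadd /vscale /vsum -s_eq0.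
  rewrite (sumR_ext (G := fun _ => 0)) ?sumR_const; first ring.
  by move=> i; rewrite b'_eq0 Rmult_0_l.
exact: Xp.
Qed.

Lemma sq_convex_comb_le n (b r : 'I_n -> R) : (forall J, 0 <= b J) -> sumR b = 1 ->
  sumR (fun J => b J * r J) ^ 2 <= sumR (fun J => b J * r J ^ 2).
Proof.
move=> b0 b1; set c := sumR (fun J => b J * r J).
have : 0 <= sumR (fun J => b J * (r J - c) ^ 2).
  by apply: sumR_ge0 => J; apply: Rmult_le_pos; [exact: b0 | exact: pow2_ge_0].
have -> : sumR (fun J => b J * (r J - c) ^ 2)
    = sumR (fun J => b J * r J ^ 2) - 2 * c * sumR (fun J => b J * r J) + c ^ 2 * sumR b.
  by rewrite -(sumRZ (2 * c)) -(sumRZ (c ^ 2)) -sumRB -sumRD; apply: sumR_ext => J; ring.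
rewrite -/c b1; nra.
Qed.

Lemma vnorm_sq_convex_comb_le n (b : 'I_n -> R) (u : 'I_n -> vec D) :
  (forall J, 0 <= b J) -> sumR b = 1 ->
  vnorm (vsum (fun J => vscale (b J) (u J))) ^ 2 <= sumR (fun J => b J * vnorm (u J) ^ 2).
Proof.
move=> b0 b1; apply: Rle_trans (sq_convex_comb_le _ b0 b1).
apply: pow_incr; split; first exact: vnorm_ge0.
apply: Rle_trans (vnorm_vsum_le _) (sumR_le _) => J.
by rewrite vnorm_scale Rabs_pos_eq //; apply: Rle_refl.
Qed.
End ConvexAnalysis.

(** * One round of the interleaved iteration *)

Section Iteration.
Variables (S C D Delta : nat) (X : vec D -> Prop) (P : vec D -> vec D).
Hypotheses (convX : convex_set X) (projP : is_projection X P).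
Variables (f : 'I_C -> vec D -> R) (g : 'I_C -> vec D -> vec D) (L N : 'I_C -> R).
Hypotheses (grad_f : forall h, has_gradient (f h) (g h)) (conv_f : forall h, convex_fun (f h)).
Hypotheses (L_ge0 : forall h, 0 <= L h) (g_bound : forall h z, X z -> vnorm (g h z) <= L h).
Hypotheses (N_ge0 : forall h, 0 <= N h)
  (g_lipschitz : forall h z z', X z -> X z' ->
     vnorm (vsub (g h z) (g h z')) <= N h * vnorm (vsub z z')).
Variables (alpha : nat -> R) (W : nat -> nat -> 'I_S -> 'I_C -> R) (M Mbar : R).
Hypotheses (alpha_ge0 : forall k, 0 <= alpha k) (M_ge0 : 0 <= M) (Mbar_ge0 : 0 <= Mbar).
Hypothesis SLC : forall k h, sumR (fun i : 'I_Delta => sumR (fun J => W i k J h)) = M.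
Hypothesis BUC : forall k h, sumR (fun i : 'I_Delta => sumR (fun J => Rabs (W i k J h))) <= Mbar.
Variables (B : nat -> 'I_S -> 'I_S -> R) (x : 'I_S -> nat -> nat -> vec D).
Hypothesis S_pos : (0 < S)%N.
Hypothesis B_stoch : forall k, doubly_stochastic (B k).
Hypothesis x_init : forall J, X (x J 0%N 0%N).
Hypothesis x_step : forall J i k, (1 <= i <= Delta)%N ->
  x J i k = P (vsub (x J i.-1 k)
               (vscale (alpha k) (vsum (fun h => vscale (W i.-1 k J h) (g h (x J i.-1 k)))))).
Hypothesis x_cons : forall I k, x I 0%N k.+1 = vsum (fun J => vscale (B k I J) (x J Delta k)).

Lemma iterate_mem_of_start k J i : X (x J 0%N k) -> (i <= Delta)%N -> X (x J i k).
Proof. by case: i => // i _ iDelta; rewrite x_step //; exact: (projP _).1. Qed.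

Lemma iterate_mem k J i : (i <= Delta)%N -> X (x J i k).
Proof.
move=> iDelta; apply: iterate_mem_of_start iDelta.
elim: k J => [|k IH] J; first exact: x_init.
have [B0 [B_row _]] := B_stoch k.
by rewrite x_cons; apply: convex_comb_mem => // J'; exact: iterate_mem_of_start.
Qed.

Definition average k := vscale (/ INR S) (vsum (fun J => x J 0%N k)).

Lemma average_mem k : X (average k).
Proof.
have S_gt0 : 0 < INR S by apply: lt_0_INR; apply/ltP.
have -> : average k = vsum (fun J => vscale (/ INR S) (x J 0%N k)).
  by apply: vec_ext => d; rewrite /average /vscale /vsum sumRZ.
apply: convex_comb_mem => //; last by move=> J; exact: iterate_mem.
  by move=> J; apply: Rlt_le; apply: Rinv_0_lt_compat.
by rewrite sumR_const; field; lra.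
Qed.

Section Round.
Variables (y : vec D) (k : nat).
Hypothesis y_mem : X y.

Definition direction J (i : nat) := vsum (fun h => vscale (W i k J h) (g h (x J i k))).
Definition step_bound J (i : nat) := sumR (fun h => Rabs (W i k J h) * L h).
Definition dist2_sum k' := sumR (fun J => vnorm (vsub (x J 0%N k') y) ^ 2).
Definition max_disagreement := maxR (fun J => vnorm (vsub (x J 0%N k) (average k))).

Lemma step_bound_ge0 J i : 0 <= step_bound J i.
Proof. by apply: sumR_ge0 => h; apply: Rmult_le_pos; [exact: Rabs_pos | exact: L_ge0]. Qed.

Lemma vnorm_direction_le J i : (i <= Delta)%N -> vnorm (direction J i) <= step_bound J i.
Proof.
move=> iDelta; apply: Rle_trans (vnorm_vsum_le _) (sumR_le _) => h.
rewrite vnorm_scale; apply: Rmult_le_compat_l; first exact: Rabs_pos.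
by apply: g_bound; exact: iterate_mem.
Qed.

Lemma x_succ J (i : nat) : (i < Delta)%N ->
  x J i.+1 k = P (vsub (x J i k) (vscale (alpha k) (direction J i))).
Proof. by move=> iDelta; rewrite x_step. Qed.

Lemma local_step_sq_le J (i : nat) : (i < Delta)%N ->
  vnorm (vsub (x J i.+1 k) y) ^ 2 <= vnorm (vsub (x J i k) y) ^ 2
    - 2 * alpha k * dot (direction J i) (vsub (x J i k) y) + alpha k ^ 2 * step_bound J i ^ 2.
Proof.
move=> iDelta; rewrite x_succ //.
apply: Rle_trans (pow_incr _ _ 2 (conj (vnorm_ge0 _) (proj_nonexpansive convX projP _ y_mem))) _.
have -> : vsub (vsub (x J i k) (vscale (alpha k) (direction J i))) y
    = vsub (vsub (x J i k) y) (vscale (alpha k) (direction J i)).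
  by apply: vec_ext => d; rewrite /vsub; ring.
rewrite vnorm_sub_sq vnorm_scale dot_scaler dotC Rabs_pos_eq // Rpow_mult_distr.
have := pow_incr _ _ 2 (conj (vnorm_ge0 _) (vnorm_direction_le J (ltnW iDelta))).
have := pow2_ge_0 (alpha k); nra.
Qed.

Lemma local_drift_le J (m : nat) : (m <= Delta)%N ->
  vnorm (vsub (x J m k) (x J 0%N k)) <= alpha k * sumR (fun i : 'I_m => step_bound J i).
Proof.
elim: m => [_ | m IH mDelta].
  have -> : vsub (x J 0%N k) (x J 0%N k) = vscale 0 (x J 0%N k).
    by apply: vec_ext => d; rewrite /vsub /vscale; ring.
  by rewrite vnorm_scale Rabs_R0 /sumR big_ord0; lra.
apply: Rle_trans (vnorm_sub_le _ (x J m k) _) _.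
have step_le : vnorm (vsub (x J m.+1 k) (x J m k)) <= alpha k * step_bound J m.
  rewrite x_succ //; apply: Rle_trans (proj_nonexpansive convX projP _ (iterate_mem _ _ (ltnW mDelta))) _.
  have -> : vsub (vsub (x J m k) (vscale (alpha k) (direction J m))) (x J m k)
      = vscale (- alpha k) (direction J m) by apply: vec_ext => d; rewrite /vsub /vscale; ring.
  rewrite vnorm_scale Rabs_Ropp Rabs_pos_eq //.
  exact: Rmult_le_compat_l (vnorm_direction_le _ (ltnW mDelta)).
have := IH (ltnW mDelta); rewrite /sumR big_ord_recr /=; lra.
Qed.

Lemma sum_step_bound_le J : sumR (fun i : 'I_Delta => step_bound J i) <= Mbar * sumR L.
Proof.
rewrite /step_bound sumR_swap -sumRZ; apply: sumR_le => h.
rewrite (sumR_ext (G := fun i : 'I_Delta => L h * Rabs (W i k J h))); last by move=> i; ring.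
rewrite sumRZ Rmult_comm; apply: Rmult_le_compat_r; first exact: L_ge0.
apply: Rle_trans (BUC k h); apply: sumR_le => i.
by apply: (sumR_ge_term (F := fun J' => Rabs (W i k J' h))) => J'; exact: Rabs_pos.
Qed.

Definition drift_radius := alpha k * Mbar * sumR L + max_disagreement.

Lemma drift_radius_ge0 : 0 <= drift_radius.
Proof.
have := maxR_ge0 (fun J => vnorm (vsub (x J 0%N k) (average k))).
have := Rmult_le_pos _ _ (Rmult_le_pos _ _ (alpha_ge0 k) Mbar_ge0) (sumR_ge0 L_ge0).
rewrite /drift_radius /max_disagreement; lra.
Qed.

Lemma dist_average_le J (i : nat) : (i <= Delta)%N ->
  vnorm (vsub (x J i k) (average k)) <= drift_radius.
Proof.
move=> iDelta; apply: Rle_trans (vnorm_sub_le _ (x J 0%N k) _) _.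
have drift := local_drift_le J iDelta.
have prefix := sumR_prefix_le (F := step_bound J) (step_bound_ge0 J) iDelta.
have total := sum_step_bound_le J.
have := maxR_ge (fun J => vnorm (vsub (x J 0%N k) (average k))) J.
have := Rmult_le_compat_l _ _ _ (alpha_ge0 k) (Rle_trans _ _ _ prefix total).
rewrite /drift_radius /max_disagreement; lra.
Qed.

Lemma average_dist_sq_le : vnorm (vsub (average k) y) ^ 2 <= / INR S * dist2_sum k.
Proof.
have S_gt0 : 0 < INR S by apply: lt_0_INR; apply/ltP.
have -> : vsub (average k) y = vsum (fun J => vscale (/ INR S) (vsub (x J 0%N k) y)).
  by apply: vec_ext => d; rewrite /average /vsub /vscale /vsum sumRZ sumRB sumR_const; field; lra.
rewrite /dist2_sum -sumRZ; apply: vnorm_sq_convex_comb_le.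
  by move=> J; apply: Rlt_le; apply: Rinv_0_lt_compat.
by rewrite sumR_const; field; lra.
Qed.

Lemma inner_deviation_le J i h : (i <= Delta)%N ->
  Rabs (dot (g h (x J i k)) (vsub (x J i k) y) - dot (g h (average k)) (vsub (average k) y))
    <= L h * drift_radius + N h * drift_radius * vnorm (vsub (average k) y).
Proof.
move=> iDelta; set z := x J i k; set a := average k.
have z_mem : X z := iterate_mem _ _ iDelta.
have -> : dot (g h z) (vsub z y) - dot (g h a) (vsub a y)
    = dot (g h z) (vsub z a) + dot (vsub (g h z) (g h a)) (vsub a y).
  by rewrite !dot_subl !dot_subr; ring.
apply: Rle_trans (Rabs_triang _ _) (Rplus_le_compat _ _ _ _ _ _).
  apply: Rle_trans (dot_le_vnorm _ _) _.
  apply: Rmult_le_compat; try exact: vnorm_ge0; first exact: g_bound.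
  exact: dist_average_le.
apply: Rle_trans (dot_le_vnorm _ _) (Rmult_le_compat_r _ _ _ (vnorm_ge0 _) _).
apply: Rle_trans (g_lipschitz _ z_mem (average_mem k)) (Rmult_le_compat_l _ _ _ (N_ge0 h) _).
exact: dist_average_le.
Qed.

Lemma weighted_inner_ge J i h : (i <= Delta)%N ->
  W i k J h * dot (g h (average k)) (vsub (average k) y)
    - Rabs (W i k J h) * (L h * drift_radius + N h * drift_radius * vnorm (vsub (average k) y))
  <= W i k J h * dot (g h (x J i k)) (vsub (x J i k) y).
Proof.
move=> iDelta; have dev := inner_deviation_le J h iDelta.
have := Rmult_le_compat_l _ _ _ (Rabs_pos (W i k J h)) dev.
rewrite -Rabs_mult; set u := W i k J h * _; have := Rle_abs (- u); rewrite Rabs_Ropp /u; lra.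
Qed.

Lemma descent_term_ge :
  M * (sumR (fun h => f h (average k)) - sumR (fun h => f h y))
    - Mbar * (sumR L * drift_radius + sumR N * drift_radius * vnorm (vsub (average k) y))
  <= sumR (fun i : 'I_Delta => sumR (fun J => dot (direction J i) (vsub (x J i k) y))).
Proof.
set e := drift_radius; set p := vnorm _.
set G0 := fun h => dot (g h (average k)) (vsub (average k) y).
set E := fun h => L h * e + N h * e * p.
have e0 : 0 <= e := drift_radius_ge0.
have p0 : 0 <= p := vnorm_ge0 _.
have E_ge0 h : 0 <= E h.
  have := L_ge0 h; have := N_ge0 h => Nh Lh.
  by apply: Rplus_le_le_0_compat; repeat apply: Rmult_le_pos.
have per_h h : M * G0 h - Mbar * E h
    <= sumR (fun i : 'I_Delta => sumR (fun J => W i k J h * dot (g h (x J i k)) (vsub (x J i k) y))).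
  apply: Rle_trans (sumR_le (fun i => sumR_le (fun J => weighted_inner_ge J h (ltnW (ltn_ord i))))).
  rewrite (sumR_ext (G := fun i : 'I_Delta =>
    G0 h * sumR (fun J => W i k J h) - E h * sumR (fun J => Rabs (W i k J h)))); last first.
    by move=> i; rewrite -!sumRZ -sumRB; apply: sumR_ext => J; rewrite /G0 /E /e /p; ring.
  rewrite sumRB !sumRZ SLC; have := Rmult_le_compat_l _ _ _ (E_ge0 h) (BUC k h); lra.
have gap : sumR (fun h => f h (average k)) - sumR (fun h => f h y) <= sumR G0.
  rewrite -sumRB; apply: sumR_le => h.
  have := convex_gradient_ineq (grad_f h) (conv_f h) (average k) y.
  have -> : dot (g h (average k)) (vsub y (average k)) = - G0 h by rewrite /G0 !dot_subr; ring.
  lra.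
have sum_E : sumR E = sumR L * e + sumR N * e * p.
  rewrite /E sumRD sumRZr (sumR_ext (F := fun h => N h * e * p) (G := fun h => N h * (e * p))) ?sumRZr; first ring.
  by move=> h; ring.
have rearrange : sumR (fun i : 'I_Delta => sumR (fun J => dot (direction J i) (vsub (x J i k) y)))
    = sumR (fun h => sumR (fun i : 'I_Delta =>
        sumR (fun J => W i k J h * dot (g h (x J i k)) (vsub (x J i k) y)))).
  rewrite [RHS]sumR_swap; apply: sumR_ext => i.
  transitivity (sumR (fun J => sumR (fun h => W i k J h * dot (g h (x J i k)) (vsub (x J i k) y)))).
    by apply: sumR_ext => J; rewrite /direction dot_vsuml; apply: sumR_ext => h; rewrite dot_scalel.
  exact: sumR_swap.
rewrite rearrange -sum_E; apply: Rle_trans (sumR_le per_h).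
rewrite sumRB !sumRZ; have := Rmult_le_compat_l _ _ _ M_ge0 gap; lra.
Qed.

Lemma local_sq_telescope J (m : nat) : (m <= Delta)%N ->
  vnorm (vsub (x J m k) y) ^ 2 <= vnorm (vsub (x J 0%N k) y) ^ 2
    - 2 * alpha k * sumR (fun i : 'I_m => dot (direction J i) (vsub (x J i k) y))
    + alpha k ^ 2 * sumR (fun i : 'I_m => step_bound J i ^ 2).
Proof.
elim: m => [_ | m IH mDelta]; first by rewrite /sumR !big_ord0; lra.
have := local_step_sq_le J mDelta; have := IH (ltnW mDelta).
rewrite /sumR !big_ord_recr /=; lra.
Qed.

Lemma round_sq_le :
  sumR (fun J => vnorm (vsub (x J Delta k) y) ^ 2) <= dist2_sum k
    - 2 * alpha k * sumR (fun i : 'I_Delta => sumR (fun J => dot (direction J i) (vsub (x J i k) y)))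
    + alpha k ^ 2 * sumR (fun i : 'I_Delta => sumR (fun J => step_bound J i ^ 2)).
Proof.
apply: Rle_trans (sumR_le (fun J => local_sq_telescope J (leqnn Delta))) _.
by rewrite sumRD sumRB !sumRZ /dist2_sum !(sumR_swap (m := S)); apply: Rle_refl.
Qed.

Lemma consensus_sq_le : dist2_sum k.+1 <= sumR (fun J => vnorm (vsub (x J Delta k) y) ^ 2).
Proof.
have [B0 [B_row B_col]] := B_stoch k.
have row_le I : vnorm (vsub (x I 0%N k.+1) y) ^ 2
    <= sumR (fun J => B k I J * vnorm (vsub (x J Delta k) y) ^ 2).
  have -> : vsub (x I 0%N k.+1) y = vsum (fun J => vscale (B k I J) (vsub (x J Delta k) y)).
    apply: vec_ext => d; rewrite x_cons /vsub /vsum /vscale.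
    rewrite (sumR_ext (F := fun J => B k I J * (x J Delta k d - y d))
                      (G := fun J => B k I J * x J Delta k d - B k I J * y d)); last by move=> J; ring.
    by rewrite sumRB sumRZr B_row; ring.
  exact: vnorm_sq_convex_comb_le.
apply: Rle_trans (sumR_le row_le) _; rewrite sumR_swap; apply: Req_le; apply: sumR_ext => J.
by rewrite sumRZr B_col Rmult_1_l.
Qed.

Lemma dist2_sum_succ_le :
  dist2_sum k.+1 <= (1 + / INR S * (2 * alpha k ^ 2 * Mbar ^ 2 * sumR N * sumR L
                                   + alpha k * Mbar * sumR N * max_disagreement)) * dist2_sum k
    - 2 * alpha k * M * (sumR (fun h => f h (average k)) - sumR (fun h => f h y))
    + alpha k ^ 2 * (sumR (fun i : 'I_Delta => sumR (fun J => step_bound J i ^ 2))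
                     + 4 * (Mbar * sumR L) ^ 2 + 2 * Mbar ^ 2 * sumR N * sumR L)
    + alpha k * (Mbar * (2 * sumR L + sumR N)) * max_disagreement.
Proof.
have descent := descent_term_ge; have round := round_sq_le; have cons := consensus_sq_le.
have p2 := average_dist_sq_le.
move: descent round cons p2; rewrite /drift_radius.
set a := alpha k; set Lb := sumR L; set Nb := sumR N; set md := max_disagreement.
set p := vnorm _; set q := / INR S * _.
move=> descent round cons p2.
have a0 : 0 <= a := alpha_ge0 k.
have md0 : 0 <= md := maxR_ge0 _.
have Lb0 : 0 <= Lb := sumR_ge0 L_ge0.
have Nb0 : 0 <= Nb := sumR_ge0 N_ge0.
have p0 : 0 <= p := vnorm_ge0 _.
have two_p : 2 * p <= q + 1 by have := pow2_ge_0 (p - 1); nra.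
have a2 := pow2_ge_0 a; have Mbar2 := pow2_ge_0 Mbar.
have K0 := Rmult_le_pos _ _ (Rmult_le_pos _ _ (Rmult_le_pos _ _ a2 Mbar2) Nb0) Lb0.
have K1 := Rmult_le_pos _ _ (Rmult_le_pos _ _ (Rmult_le_pos _ _ a0 Mbar_ge0) Nb0) md0.
have q0 : 0 <= q by have := pow2_ge_0 p; lra.
have cross : 2 * a * Mbar * (Nb * (a * Mbar * Lb + md) * p)
    <= (a ^ 2 * Mbar ^ 2 * Nb * Lb + a * Mbar * Nb * md) * (q + 1).
  have -> : 2 * a * Mbar * (Nb * (a * Mbar * Lb + md) * p)
      = (a ^ 2 * Mbar ^ 2 * Nb * Lb + a * Mbar * Nb * md) * (2 * p) by ring.
  by apply: Rmult_le_compat_l => //; lra.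
have := Rmult_le_compat_l _ _ _ a0 descent.
have := Rmult_le_pos _ _ (Rmult_le_pos _ _ a2 Mbar2) (pow2_ge_0 Lb).
have := Rmult_le_pos _ _ K0 q0.
have -> : (1 + / INR S * (2 * a ^ 2 * Mbar ^ 2 * Nb * Lb + a * Mbar * Nb * md)) * dist2_sum k
    = dist2_sum k + (2 * a ^ 2 * Mbar ^ 2 * Nb * Lb + a * Mbar * Nb * md) * q by rewrite /q; ring.
lra.
Qed.
End Round.
End Iteration.

Theorem lemma3
  (S C D Delta : nat) (HS : (0 < S)%N) (HC : (0 < C)%N) (HD : (0 < D)%N)
  (HDelta : (0 < Delta)%N)
  (X : vec D -> Prop) (P : vec D -> vec D)
  (HXne : exists x, X x) (HXconv : convex_set X) (HXcomp : compact_set X)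
  (HP : is_projection X P)
  (f : 'I_C -> vec D -> R) (g : 'I_C -> vec D -> vec D)
  (Hgrad : forall h, has_gradient (f h) (g h))
  (Hgcont : forall h, continuous_vec (g h))
  (Hfconv : forall h, convex_fun (f h))
  (L N : 'I_C -> R)
  (HL : forall h x, X x -> vnorm (g h x) <= L h)
  (HNpos : forall h, 0 < N h)
  (HN : forall h x y, X x -> X y ->
          vnorm (vsub (g h x) (g h y)) <= N h * vnorm (vsub x y))
  (alpha : nat -> R) (Halpha : forall k, 0 < alpha k)
  (W : nat -> nat -> 'I_S -> 'I_C -> R)   (* W i k J h = W_{i,k}[J,h] *)
  (M Mbar : R) (HM : 0 < M) (HMbar : 0 < Mbar)
  (HSLC : forall k h, sumR (fun i : 'I_Delta => sumR (fun J => W i k J h)) = M)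
  (HBUC : forall k h, sumR (fun i : 'I_Delta => sumR (fun J => Rabs (W i k J h))) <= Mbar)
  (B : nat -> 'I_S -> 'I_S -> R) (HB : forall k, doubly_stochastic (B k))
  (x : 'I_S -> nat -> nat -> vec D)     (* x J i k = x^J_{i,k} *)
  (Hx0 : forall J, X (x J 0%N 0%N))
  (Hstep : forall J i k, (1 <= i <= Delta)%N ->
     x J i k = P (vsub (x J i.-1 k)
                  (vscale (alpha k)
                     (vsum (fun h => vscale (W i.-1 k J h) (g h (x J i.-1 k)))))))
  (Hcons : forall I k, x I 0%N k.+1 = vsum (fun J => vscale (B k I J) (x J Delta k)))
  (y : vec D) (Hy : X y) (k : nat) :
  let fsum := fun z => sumR (fun h => f h z) in
  let Lb := sumR L in
  let Nb := sumR N in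
  let xbar := fun i k => vscale (/ INR S) (vsum (fun J => x J i k)) in
  let delta := fun J k => vsub (x J 0%N k) (xbar 0%N k) in
  let maxdelta := fun k => maxR (fun J => vnorm (delta J k)) in
  let eta2 := fun k => sumR (fun J => vnorm (vsub (x J 0%N k) y) ^ 2) in
  let gamma := fun k => / INR S *
      (2 * alpha k ^ 2 * Mbar ^ 2 * Nb * Lb + alpha k * Mbar * Nb * maxdelta k) in
  let C1sq := fun k => sumR (fun i : 'I_Delta => sumR (fun J =>
      (sumR (fun h => Rabs (W i k J h) * L h)) ^ 2)) in
  let C2sq := 4 * (Mbar * Lb) ^ 2 in
  let C3sq := 2 * Mbar ^ 2 * Nb * Lb in
  let C4 := Mbar * (2 * Lb + Nb) in
  eta2 k.+1 <= (1 + gamma k) * eta2 k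
               - 2 * alpha k * M * (fsum (xbar 0%N k) - fsum y)
               + alpha k ^ 2 * (C1sq k + C2sq + C3sq)
               + alpha k * C4 * maxdelta k.
Proof.
move=> fsum Lb Nb xbar delta maxdelta eta2 gamma C1sq C2sq C3sq C4.
have L_ge0 h : 0 <= L h by have [z Xz] := HXne; exact: Rle_trans (vnorm_ge0 _) (HL h z Xz).
have N_ge0 h : 0 <= N h := Rlt_le _ _ (HNpos h).
have alpha_ge0 k' : 0 <= alpha k' := Rlt_le _ _ (Halpha k').
exact: (dist2_sum_succ_le HXconv HP Hgrad Hfconv L_ge0 HL N_ge0 HN alpha_ge0 (Rlt_le _ _ HM)
          (Rlt_le _ _ HMbar) HSLC HBUC HS HB Hx0 Hstep Hcons k Hy).
Qed.
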